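(* Let $|\mathcal{T}|=2$ and let $P\in\Delta_{\mathcal{T},\mathcal{X},\mathcal{Y}}$ be such that $\operatorname{supp}(\Delta_P)=\mathcal{T}\times\mathcal{X}\times\mathcal{Y}$. Suppose $\tilde Q$ lies in the relative interior of $\Delta_P$ and $\tilde Q\in\arg\max_{Q\in\Delta_P}H_Q(T\mid X,Y)$. Then under $\tilde Q$, $T$ is conditionally independent of $X$ given $Y$, or $T$ is conditionally independent of $Y$ given $X$ (or both). Consequently $UI(T:X\setminus Y)=0$ or $UI(T:Y\setminus X)=0$.
   Context: $T,X,Y$ are random variables with finite state spaces $\mathcal{T},\mathcal{X},\mathcal{Y}$; $\Delta_{\mathcal{T},\mathcal{X},\mathcal{Y}}$ is the set of all joint distributions on $\mathcal{T}\times\mathcal{X}\times\mathcal{Y}$. For $P\in\Delta_{\mathcal{T},\mathcal{X},\mathcal{Y}}$, $\Delta_P=\{Q\in\Delta_{\mathcal{T},\mathcal{X},\mathcal{Y}}: Q(X=x,T=t)=P(X=x,T=t),\ Q(Y=y,T=t)=P(Y=y,T=t)\ \forall x,y,t\}$ and $\operatorname{supp}(\Delta_P)=\bigcup_{Q\in\Delta_P}\operatorname{supp}(Q)$. $UI(T:X\setminus Y)=\min_{Q\in\Delta_P}I_Q(T:X\mid Y)$, and $UI(T:Y\setminus X)=\min_{Q\in\Delta_P}I_Q(T:Y\mid X)$ (note $\Delta_P$ is symmetric in $X,Y$). *)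

From mathcomp Require Import all_boot.
From Stdlib Require Import Reals.

Set Implicit Arguments.
Unset Strict Implicit.
Unset Printing Implicit Defensive.

Local Open Scope R_scope.

Definition sumR (I : finType) (F : I -> R) : R := \big[Rplus/0]_(i : I) F i.

Section Info.
Variables (T X Y : finType).

Definition jdist := T -> X -> Y -> R.

Definition is_dist (Q : jdist) : Prop :=
  (forall t x y, 0 <= Q t x y) /\ sumR (fun t => sumR (fun x => sumR (fun y => Q t x y))) = 1.

Definition mTX (Q : jdist) t x := sumR (fun y => Q t x y).
Definition mTY (Q : jdist) t y := sumR (fun x => Q t x y).
Definition mXY (Q : jdist) x y := sumR (fun t => Q t x y).
Definition mX (Q : jdist) x := sumR (fun t => sumR (fun y => Q t x y)).
Definition mY (Q : jdist) y := sumR (fun t => sumR (fun x => Q t x y)).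

Definition DeltaP (P Q : jdist) : Prop :=
  is_dist Q /\ (forall t x, mTX Q t x = mTX P t x) /\ (forall t y, mTY Q t y = mTY P t y).

Definition full_supp_DeltaP (P : jdist) : Prop :=
  forall t x y, exists Q, DeltaP P Q /\ 0 < Q t x y.

(* affine hull of Delta_P: all finite affine combinations of its elements *)
Definition aff_comb (l : seq (R * jdist)) : jdist :=
  fun t x y => \big[Rplus/0]_(p <- l) (fst p * snd p t x y).

Definition in_aff_DeltaP (P Q : jdist) : Prop :=
  exists l : seq (R * jdist),
    (forall p, List.In p l -> DeltaP P (snd p)) /\
    \big[Rplus/0]_(p <- l) fst p = 1 /\
    Q = aff_comb l.

(* relative interior: interior of Delta_P relative to its affine hull
   (w.r.t. the sup-norm on R^(T x X x Y)) *)
Definition rel_interior_DeltaP (P Q : jdist) : Prop :=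
  DeltaP P Q /\
  exists eps, 0 < eps /\
    forall Q', in_aff_DeltaP P Q' ->
      (forall t x y, Rabs (Q' t x y - Q t x y) < eps) -> DeltaP P Q'.

(* conditional entropy H_Q(T | X, Y), with 0 log 0 = 0 (natural log) *)
Definition condH_T_XY (Q : jdist) : R :=
  - sumR (fun t => sumR (fun x => sumR (fun y =>
      if Rlt_dec 0 (Q t x y) then Q t x y * ln (Q t x y / mXY Q x y) else 0))).

(* conditional mutual informations (natural log), summing over the support *)
Definition condI_TX_Y (Q : jdist) : R :=
  sumR (fun t => sumR (fun x => sumR (fun y =>
    if Rlt_dec 0 (Q t x y)
    then Q t x y * ln ((Q t x y * mY Q y) / (mTY Q t y * mXY Q x y)) else 0))).

Definition condI_TY_X (Q : jdist) : R :=
  sumR (fun t => sumR (fun x => sumR (fun y =>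
    if Rlt_dec 0 (Q t x y)
    then Q t x y * ln ((Q t x y * mX Q x) / (mTX Q t x * mXY Q x y)) else 0))).

Definition CI_TX_given_Y (Q : jdist) : Prop :=
  forall t x y, Q t x y * mY Q y = mTY Q t y * mXY Q x y.
Definition CI_TY_given_X (Q : jdist) : Prop :=
  forall t x y, Q t x y * mX Q x = mTX Q t x * mXY Q x y.

Definition is_min_value (S : R -> Prop) (r : R) : Prop :=
  S r /\ forall s, S s -> r <= s.

Definition UI_X_minus_Y (P : jdist) (r : R) : Prop :=
  is_min_value (fun s => exists Q, DeltaP P Q /\ s = condI_TX_Y Q) r.
Definition UI_Y_minus_X (P : jdist) (r : R) : Prop :=
  is_min_value (fun s => exists Q, DeltaP P Q /\ s = condI_TY_X Q) r.

End Info.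

(* A maximizer [Q] of H(T|X,Y) in the relative interior of Delta_P is positive, so
   [Q + s D] stays in Delta_P for small [s] whenever [D] has vanishing (T,X)- and
   (T,Y)-marginals.  Along [D = e_t (e_x - e_x') (e_y - e_y')] the derivative of the
   conditional entropy is an alternating sum of [ln Q(t|x,y)], so its vanishing says
   that every matrix [Q(t|.,.)] has rank one.  For |T| = 2 the two matrices are [v]
   and [1 - v], and both have rank one only if [v] is constant along rows or along
   columns: T is conditionally independent of Y given X, or of X given Y.  The
   corresponding conditional mutual information then vanishes at [Q], and it is
   nonnegative (Gibbs) on all of Delta_P, so the unique information is 0. *)

From HB Require Import structures.
From mathcomp Require Import all_boot.
From Stdlib Require Import Reals Lra FunctionalExtensionality Classical.
Set Implicit Arguments.
Unset Strict Implicit.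
Unset Printing Implicit Defensive.
Local Open Scope R_scope.

HB.instance Definition _ :=
  Monoid.isComLaw.Build R 0 Rplus (fun a b c => esym (Rplus_assoc a b c))
    Rplus_comm Rplus_0_l.

Section FiniteSums.
Context {I J : finType}.

Lemma eq_sumR (F G : I -> R) : (forall i, F i = G i) -> sumR F = sumR G.
Proof. by move=> FG; apply: eq_bigr => i _. Qed.

Lemma sumRD (F G : I -> R) : sumR (fun i => F i + G i) = sumR F + sumR G.
Proof. exact: big_split. Qed.

Lemma sumRZ (c : R) (F : I -> R) : sumR (fun i => c * F i) = c * sumR F.
Proof. rewrite /sumR; elim/big_rec2: _ => [|i y1 y2 _ ->]; ring. Qed.

Lemma sumRB (F G : I -> R) : sumR (fun i => F i - G i) = sumR F - sumR G.
Proof.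
rewrite (@eq_sumR _ (fun i => F i + -1 * G i)); last by move=> i; ring.
rewrite sumRD sumRZ; ring.
Qed.

Lemma sumR_eq0 (F : I -> R) : (forall i, F i = 0) -> sumR F = 0.
Proof. by move=> F0; apply: big1 => i _. Qed.

Lemma exchange_sumR (F : I -> J -> R) :
  sumR (fun i => sumR (fun j => F i j)) = sumR (fun j => sumR (fun i => F i j)).
Proof. exact: exchange_big. Qed.

Lemma leR_sumR (F G : I -> R) : (forall i, F i <= G i) -> sumR F <= sumR G.
Proof.
move=> FG; rewrite /sumR; elim/big_rec2: _ => [|i y1 y2 _]; last have := FG i; lra.
Qed.

Lemma sumR_ge0 (F : I -> R) : (forall i, 0 <= F i) -> 0 <= sumR F.
Proof.
move=> F0; rewrite /sumR; elim/big_rec: _ => [|i y _]; last have := F0 i; lra.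
Qed.

Lemma leR_term_sumR (F : I -> R) (i : I) : (forall j, 0 <= F j) -> F i <= sumR F.
Proof.
move=> F0; rewrite /sumR (bigD1 i) //=.
have : 0 <= \big[Rplus/0]_(j | j != i) F j.
  by elim/big_rec: _ => [|j y _]; last have := F0 j; lra.
lra.
Qed.

Definition delta (a i : I) : R := if a == i then 1 else 0.

Lemma sumR_delta (a : I) (F : I -> R) : sumR (fun i => delta a i * F i) = F a.
Proof.
rewrite /sumR (bigD1 a) //= /delta eqxx big1; first ring.
by move=> i; rewrite eq_sym => /negbTE ->; ring.
Qed.

Lemma sumR_delta_sub (a b : I) (F : I -> R) :
  sumR (fun i => (delta a i - delta b i) * F i) = F a - F b.
Proof.
rewrite (@eq_sumR _ (fun i => delta a i * F i - delta b i * F i)).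
  by rewrite sumRB !sumR_delta.
by move=> i; ring.
Qed.

Lemma sumR_card2 (i0 i1 : I) (F : I -> R) :
  i0 != i1 -> (forall i, i = i0 \/ i = i1) -> sumR F = F i0 + F i1.
Proof.
move=> i01 cover; rewrite /sumR (bigD1 i0) //=; congr (_ + _).
apply: big_pred1 => i /=.
by case: (cover i) => ->; rewrite ?eqxx ?(negbTE i01) // eq_sym i01.
Qed.

End FiniteSums.

Lemma card2_cover (I : finType) : #|I| = 2%nat ->
  exists i0 i1 : I, i0 != i1 /\ forall i, i = i0 \/ i = i1.
Proof.
rewrite cardE; have := enum_uniq I; have := mem_enum I.
case: (enum I) => [|a [|b [|c s]]] //= mem; rewrite inE andbT => ab _.
exists a, b; split => // i.
have : i \in [:: a; b] by rewrite mem.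
by rewrite !inE => /orP [] /eqP ->; [left | right].
Qed.

Lemma derivable_pt_lim_sumR (I : finType) (F : I -> R -> R) (F' : I -> R) (x : R) :
  (forall i, derivable_pt_lim (F i) x (F' i)) ->
  derivable_pt_lim (fun s => sumR (fun i => F i s)) x (sumR F').
Proof.
move=> dF; rewrite /sumR; elim: (index_enum I) => [|i r IH].
  rewrite big_nil; apply: (derivable_pt_lim_ext (fct_cte 0)).
    by move=> s; rewrite big_nil.
  exact: derivable_pt_lim_const.
rewrite big_cons.
apply: (derivable_pt_lim_ext (plus_fct (F i) (fun s => \big[Rplus/0]_(j <- r) F j s))).
  by move=> s; rewrite big_cons.
exact: derivable_pt_lim_plus.
Qed.

Lemma derivable_pt_lim_affine (a b x : R) : derivable_pt_lim (fun s => a + s * b) x b.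
Proof.
move=> eps eps0; exists (mkposreal 1 Rlt_0_1) => h h0 _.
by rewrite (_ : _ - b = 0); [rewrite Rabs_R0 | field].
Qed.

Lemma derivable_pt_lim_local_min (f : R -> R) (l r : R) :
  derivable_pt_lim f 0 l -> 0 < r -> (forall s, -r < s < r -> f 0 <= f s) -> l = 0.
Proof.
move=> df r0 fmin.
by apply: (deriv_minimum f (-r) r 0 (exist _ l df)); [lra | lra | move=> s *; apply: fmin].
Qed.

Lemma derivable_pt_lim_xlnx_div (q0 dq m dm : R) (M : R -> R) :
  0 < q0 -> 0 < m -> M 0 = m -> derivable_pt_lim M 0 dm ->
  derivable_pt_lim (fun s => (q0 + s * dq) * ln ((q0 + s * dq) / M s)) 0
    (dq * ln (q0 / m) + dq - dm * (q0 / m)).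
Proof.
move=> q0_gt0 m_gt0 M0 dM.
have dq_lin := derivable_pt_lim_affine q0 dq 0.
have ratio0 : 0 < (q0 + 0 * dq) / M 0.
  by rewrite Rmult_0_l Rplus_0_r M0; apply: Rdiv_lt_0_compat.
have dratio := derivable_pt_lim_div _ _ _ _ _ dq_lin dM (ltac:(lra) : M 0 <> 0).
have dln := derivable_pt_lim_comp _ ln 0 _ _ dratio (derivable_pt_lim_ln _ ratio0).
have := derivable_pt_lim_mult _ _ 0 _ _ dq_lin dln.
rewrite /comp /div_fct Rmult_0_l Rplus_0_r M0 /Rsqr.
by congr derivable_pt_lim; field; lra.
Qed.

Definition rank_le1 (A B : Type) (v : A -> B -> R) : Prop :=
  forall a a' b b', v a b * v a' b' = v a b' * v a' b.

Lemma rank_le1_compl_const (A B : Type) (v : A -> B -> R) :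
  rank_le1 v -> rank_le1 (fun a b => 1 - v a b) ->
  (forall a b b', v a b = v a b') \/ (forall a a' b, v a b = v a' b).
Proof.
move=> v1 w1.
(* the minor identity of [1 - v] minus that of [v] is [v a b + v a' b' = v a b' + v a' b] *)
have minor_factor a a' b b' : (v a b - v a b') * (v a b - v a' b) = 0.
  have h1 := v1 a a' b b'; have h2 := w1 a a' b b'.
  have sum_eq : v a b + v a' b' = v a b' + v a' b by nra.
  by have -> : v a b' = v a b + v a' b' - v a' b; [lra | nra].
case: (classic (exists a0 b1 b2, v a0 b1 <> v a0 b2)) => [[a0 [b1 [b2 b12]]] | const].
  right; suff col a b : v a b = v a0 b by move=> a a' b; rewrite col (col a').
  case: (Req_dec (v a0 b) (v a0 b1)) => E.
    by case/Rmult_integral: (minor_factor a0 a b b2) => ?; [exfalso; apply: b12 | ]; lra.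
  by case/Rmult_integral: (minor_factor a0 a b b1); lra.
by left => a b b'; apply: NNPP => ?; apply: const; exists a, b, b'.
Qed.

Section ConditionalEntropy.
Context {T X Y : finType}.
Implicit Types (P Q D : jdist T X Y).

Definition sum3 (F : T -> X -> Y -> R) : R :=
  sumR (fun t => sumR (fun x => sumR (fun y => F t x y))).

Lemma sum3_exchange (F : T -> X -> Y -> R) :
  sum3 F = sumR (fun x => sumR (fun y => sumR (fun t => F t x y))).
Proof.
rewrite /sum3 exchange_sumR; apply: eq_sumR => x; exact: exchange_sumR.
Qed.

Lemma leR_term_sum3 (F : T -> X -> Y -> R) t x y :
  (forall t x y, 0 <= F t x y) -> F t x y <= sum3 F.
Proof.
move=> F0; apply: Rle_trans (leR_term_sumR t _); last first.
  by move=> t'; do 2 (apply: sumR_ge0 => ?); exact: F0.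
apply: Rle_trans (leR_term_sumR x _); last by move=> x'; apply: sumR_ge0.
exact: leR_term_sumR.
Qed.

Lemma mXY_gt0 Q (t : T) x y : (forall t x y, 0 < Q t x y) -> 0 < mXY Q x y.
Proof.
move=> Q0; apply: Rlt_le_trans (Q0 t x y) _.
by apply: (leR_term_sumR (F := fun t => Q t x y)) => t'; apply: Rlt_le.
Qed.

Lemma sumR_div_mXY Q x y : 0 < mXY Q x y -> sumR (fun t => Q t x y / mXY Q x y) = 1.
Proof.
move=> m0; rewrite (@eq_sumR _ _ (fun t => / mXY Q x y * Q t x y)).
  by rewrite sumRZ Rinv_l //; lra.
by move=> t; rewrite Rmult_comm.
Qed.

Definition cond_negentropy Q : R :=
  sum3 (fun t x y => Q t x y * ln (Q t x y / mXY Q x y)).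

Lemma condH_T_XY_gt0 Q : (forall t x y, 0 < Q t x y) -> condH_T_XY Q = - cond_negentropy Q.
Proof.
move=> Q0; congr Ropp; do 3 (apply: eq_sumR => ?).
by case: Rlt_dec => // /(_ (Q0 _ _ _)).
Qed.

Definition perturb Q D (s : R) : jdist T X Y := fun t x y => Q t x y + s * D t x y.

Lemma perturb0 Q D : perturb Q D 0 = Q.
Proof.
by apply: functional_extensionality => t; apply: functional_extensionality => x;
  apply: functional_extensionality => y; rewrite /perturb Rmult_0_l Rplus_0_r.
Qed.

Lemma mTX_perturb Q D s t x : mTX (perturb Q D s) t x = mTX Q t x + s * mTX D t x.
Proof. by rewrite /mTX /perturb sumRD sumRZ. Qed.

Lemma mTY_perturb Q D s t y : mTY (perturb Q D s) t y = mTY Q t y + s * mTY D t y.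
Proof. by rewrite /mTY /perturb sumRD sumRZ. Qed.

Lemma mXY_perturb Q D s x y : mXY (perturb Q D s) x y = mXY Q x y + s * mXY D x y.
Proof. by rewrite /mXY /perturb sumRD sumRZ. Qed.

Lemma cond_negentropy_derivative Q D :
  (forall t x y, 0 < Q t x y) -> (forall x y, 0 < mXY Q x y) ->
  derivable_pt_lim (fun s => cond_negentropy (perturb Q D s)) 0
    (sum3 (fun t x y => D t x y * ln (Q t x y / mXY Q x y))).
Proof.
move=> Q0 m0.
have -> : sum3 (fun t x y => D t x y * ln (Q t x y / mXY Q x y)) =
    sum3 (fun t x y => D t x y * ln (Q t x y / mXY Q x y) + D t x y
                       - mXY D x y * (Q t x y / mXY Q x y)).
  rewrite !sum3_exchange; do 2 (apply: eq_sumR => ?).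
  by rewrite sumRB sumRD sumRZ sumR_div_mXY // /mXY; ring.
do 3 (apply: derivable_pt_lim_sumR => ?).
apply: derivable_pt_lim_xlnx_div => //.
  by rewrite mXY_perturb Rmult_0_l Rplus_0_r.
apply: (derivable_pt_lim_ext (fun s => mXY Q _ _ + s * mXY D _ _)).
  by move=> s; rewrite mXY_perturb.
exact: derivable_pt_lim_affine.
Qed.

Lemma DeltaP_perturb P Q D s : DeltaP P Q ->
  (forall t x, mTX D t x = 0) -> (forall t y, mTY D t y = 0) ->
  (forall t x y, 0 <= perturb Q D s t x y) -> DeltaP P (perturb Q D s).
Proof.
move=> [[_ Q1] [QTX QTY]] DTX DTY Qs0.
have sTX t x : mTX (perturb Q D s) t x = mTX Q t x.
  by rewrite mTX_perturb DTX Rmult_0_r Rplus_0_r.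
have sTY t y : mTY (perturb Q D s) t y = mTY Q t y.
  by rewrite mTY_perturb DTY Rmult_0_r Rplus_0_r.
split; [split | split] => // [|t x|t y]; last by rewrite sTY.
- by rewrite -Q1; apply: eq_sumR => t; apply: eq_sumR => x; exact: sTX.
- by rewrite sTX.
Qed.

Lemma perturb_gt0_near0 Q D : (forall t x y, 0 < Q t x y) ->
  exists r, 0 < r /\ forall s, -r < s < r -> forall t x y, 0 < perturb Q D s t x y.
Proof.
move=> Q0; set S := sum3 (fun t x y => Rabs (D t x y) / Q t x y).
have ratio0 t x y : 0 <= Rabs (D t x y) / Q t x y.
  by apply: Rmult_le_pos; [exact: Rabs_pos | apply/Rlt_le/Rinv_0_lt_compat].
have S0 : 0 <= S by do 3 (apply: sumR_ge0 => ?); exact: ratio0.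
exists (/ (1 + S)); split => [|s s_lt t x y]; first by apply: Rinv_0_lt_compat; lra.
have D_le : Rabs (D t x y) <= S * Q t x y.
  have := leR_term_sum3 t x y ratio0; have := Q0 t x y.
  move=> q0 /(Rmult_le_compat_r (Q t x y) _ _ (Rlt_le _ _ q0)).
  by rewrite /Rdiv Rmult_assoc Rinv_l ?Rmult_1_r //; lra.
have s_abs : Rabs s * (1 + S) < 1.
  have := Rinv_r (1 + S) ltac:(lra); have := Rabs_def1 s (/ (1 + S)).
  case: (Rcase_abs s) => [s_neg|s_pos]; [rewrite Rabs_left | rewrite Rabs_right]; nra.
have := Rabs_def2 (s * D t x y) (Q t x y); rewrite /perturb Rabs_mult.
have := Q0 t x y; have := Rabs_pos s; have := Rabs_pos (D t x y); nra.
Qed.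

Lemma maxent_stationary P Q D : DeltaP P Q ->
  (forall t x y, 0 < Q t x y) -> (forall x y, 0 < mXY Q x y) ->
  (forall Q', DeltaP P Q' -> condH_T_XY Q' <= condH_T_XY Q) ->
  (forall t x, mTX D t x = 0) -> (forall t y, mTY D t y = 0) ->
  sum3 (fun t x y => D t x y * ln (Q t x y / mXY Q x y)) = 0.
Proof.
move=> HQ Q0 m0 Qmax DTX DTY.
have [r [r0 Qs0]] := perturb_gt0_near0 D Q0.
apply: (derivable_pt_lim_local_min (cond_negentropy_derivative D Q0 m0) r0) => s s_r.
have := Qmax _ (DeltaP_perturb HQ DTX DTY (fun t x y => Rlt_le _ _ (Qs0 s s_r t x y))).
by rewrite perturb0 !condH_T_XY_gt0 //; [lra | exact: Qs0].
Qed.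

Definition rect_dir (t0 : T) (x1 x2 : X) (y1 y2 : Y) : jdist T X Y :=
  fun t x y => delta t0 t * ((delta x1 x - delta x2 x) * (delta y1 y - delta y2 y)).

Lemma mTX_rect_dir t0 x1 x2 y1 y2 t x : mTX (rect_dir t0 x1 x2 y1 y2) t x = 0.
Proof.
rewrite /mTX (@eq_sumR _ _ (fun y => (delta y1 y - delta y2 y) *
  (delta t0 t * (delta x1 x - delta x2 x)))); last by move=> y; rewrite /rect_dir; ring.
by rewrite sumR_delta_sub Rminus_diag.
Qed.

Lemma mTY_rect_dir t0 x1 x2 y1 y2 t y : mTY (rect_dir t0 x1 x2 y1 y2) t y = 0.
Proof.
rewrite /mTY (@eq_sumR _ _ (fun x => (delta x1 x - delta x2 x) *
  (delta t0 t * (delta y1 y - delta y2 y)))); last by move=> x; rewrite /rect_dir; ring.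
by rewrite sumR_delta_sub Rminus_diag.
Qed.

Lemma sum3_rect_dir t0 x1 x2 y1 y2 (G : T -> X -> Y -> R) :
  sum3 (fun t x y => rect_dir t0 x1 x2 y1 y2 t x y * G t x y) =
  G t0 x1 y1 - G t0 x1 y2 - G t0 x2 y1 + G t0 x2 y2.
Proof.
rewrite /sum3 (@eq_sumR _ _ (fun t => delta t0 t * sumR (fun x => (delta x1 x - delta x2 x) *
  sumR (fun y => (delta y1 y - delta y2 y) * G t x y)))).
  by rewrite sumR_delta sumR_delta_sub !sumR_delta_sub; ring.
move=> t; rewrite -sumRZ; apply: eq_sumR => x; rewrite -!sumRZ.
by apply: eq_sumR => y; rewrite /rect_dir; ring.
Qed.

Lemma maxent_rank_le1 P Q t : DeltaP P Q -> (forall t x y, 0 < Q t x y) ->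
  (forall Q', DeltaP P Q' -> condH_T_XY Q' <= condH_T_XY Q) ->
  rank_le1 (fun x y => Q t x y / mXY Q x y).
Proof.
move=> HQ Q0 Qmax x1 x2 y1 y2.
have m0 x y : 0 < mXY Q x y := mXY_gt0 t x y Q0.
have u0 x y : 0 < Q t x y / mXY Q x y := Rdiv_lt_0_compat _ _ (Q0 t x y) (m0 x y).
have := maxent_stationary HQ Q0 m0 Qmax (mTX_rect_dir t x1 x2 y1 y2) (mTY_rect_dir t x1 x2 y1 y2).
rewrite sum3_rect_dir => ln_eq.
apply: ln_inv; try apply: Rmult_lt_0_compat => //.
by rewrite (ln_mult _ _ (u0 x1 y1) (u0 x2 y2)) (ln_mult _ _ (u0 x1 y2) (u0 x2 y1)); lra.
Qed.

Lemma CI_TY_given_X_of_ratio_const Q : (forall x y, 0 < mXY Q x y) ->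
  (forall t x y y', Q t x y / mXY Q x y = Q t x y' / mXY Q x y') -> CI_TY_given_X Q.
Proof.
move=> m0 u_const t x y.
have Q_eq y' : Q t x y' = Q t x y / mXY Q x y * mXY Q x y'.
  by rewrite (u_const t x y y'); field; have := m0 x y'; lra.
have -> : mTX Q t x = Q t x y / mXY Q x y * mX Q x.
  by rewrite /mTX (eq_sumR Q_eq) sumRZ /mX exchange_sumR.
by field; have := m0 x y; lra.
Qed.

Lemma dist_le1 Q t x y : is_dist Q -> Q t x y <= 1.
Proof. by case=> Q0 <-; apply: leR_term_sum3. Qed.

Lemma rel_interior_gt0 P Q : full_supp_DeltaP P -> rel_interior_DeltaP P Q ->
  forall t x y, 0 < Q t x y.
Proof.
move=> full [HQ [eps [eps0 interior]]] t x y.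
have [Q' [HQ' Q'0]] := full t x y.
set d := eps / 2; set l := [:: (1 + d, Q); (- d, Q')].
(* [(1 + d) Q - d Q'] is in Delta_P, so [Q t x y = 0] would make it negative there *)
have lE t' x' y' : aff_comb l t' x' y' = Q t' x' y' + d * (Q t' x' y' - Q' t' x' y').
  by rewrite /aff_comb !big_cons big_nil /=; ring.
have [[l_ge0 _] _] : DeltaP P (aff_comb l).
  apply: interior => [|t' x' y'].
    exists l; split; last by split => //; rewrite !big_cons big_nil /=; ring.
    by move=> p /= [<- | [<- | []]].
  rewrite lE; apply: Rabs_def1;
  have := dist_le1 t' x' y' HQ.1; have := dist_le1 t' x' y' HQ'.1;
  have := HQ.1.1 t' x' y'; have := HQ'.1.1 t' x' y'; rewrite /d; nra.
by have := l_ge0 t x y; rewrite lE; have := HQ.1.1 t x y; rewrite /d; nra.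
Qed.

Lemma ln_div_lower (q a : R) : 0 < q -> 0 < a -> q - a <= q * ln (q / a).
Proof.
move=> q0 a0; have := exp_ineq1_le (ln (a / q)).
have -> : ln (a / q) = - ln (q / a).
  by rewrite -ln_Rinv; [congr ln; field; lra | exact: Rdiv_lt_0_compat].
rewrite exp_Ropp exp_ln; last exact: Rdiv_lt_0_compat.
have : / (q / a) * q = a by field; lra.
nra.
Qed.

Lemma sum3_cond_indep_dist Q : is_dist Q ->
  sum3 (fun t x y => mTY Q t y * mXY Q x y / mY Q y) = 1.
Proof.
case=> _ Q1.
have mY1 : sumR (fun y => mY Q y) = 1.
  by rewrite -Q1 /mY exchange_sumR; apply: eq_sumR => t; rewrite exchange_sumR.
rewrite -mY1 /sum3 (@eq_sumR _ _ (fun t => sumR (fun y => sumR (fun x =>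
  mTY Q t y * mXY Q x y / mY Q y)))); last by move=> t; rewrite exchange_sumR.
rewrite exchange_sumR; apply: eq_sumR => y.
have mXY_mY : sumR (fun x => mXY Q x y) = mY Q y by rewrite /mY exchange_sumR.
rewrite (@eq_sumR _ _ (fun t => mY Q y / mY Q y * mTY Q t y)); last first.
  move=> t; rewrite (@eq_sumR _ _ (fun x => mTY Q t y / mY Q y * mXY Q x y)).
    by rewrite sumRZ mXY_mY /Rdiv; ring.
  by move=> x; rewrite /Rdiv; ring.
rewrite sumRZ; change (sumR (fun t => mTY Q t y)) with (mY Q y).
(* holds also for [mY Q y = 0], where [0 / 0 = 0] *)
by case: (Req_dec (mY Q y) 0) => [-> | ?]; [rewrite /Rdiv; ring | field].
Qed.

Lemma condI_TX_Y_ge0 Q : is_dist Q -> 0 <= condI_TX_Y Q.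
Proof.
move=> HQ; have [Q0 _] := HQ.
rewrite -(Rminus_diag 1) -{1}HQ.2 -(sum3_cond_indep_dist HQ).
rewrite /sum3 -sumRB; apply: leR_sumR => t; rewrite -sumRB; apply: leR_sumR => x.
rewrite -sumRB; apply: leR_sumR => y.
have le_mTY : Q t x y <= mTY Q t y by apply: leR_term_sumR.
have le_mXY : Q t x y <= mXY Q x y by apply: (leR_term_sumR (F := fun t => Q t x y)).
have le_mY : mTY Q t y <= mY Q y.
  by apply: (leR_term_sumR (F := fun t => mTY Q t y)) => t'; apply: sumR_ge0.
have mTY0 : 0 <= mTY Q t y by apply: sumR_ge0.
have mXY0 : 0 <= mXY Q x y by apply: sumR_ge0.
case: Rlt_dec => /= [q0 | nq0]; last first.
  suff : 0 <= mTY Q t y * mXY Q x y / mY Q y by have := Q0 t x y; lra.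
  case: (Req_dec (mY Q y) 0) => [-> | mY0]; first by rewrite /Rdiv Rinv_0; lra.
  by apply: Rmult_le_pos; [apply: Rmult_le_pos | apply/Rlt_le/Rinv_0_lt_compat]; lra.
have indep_gt0 : 0 < mTY Q t y * mXY Q x y / mY Q y.
  by apply: Rdiv_lt_0_compat; [apply: Rmult_lt_0_compat |]; lra.
rewrite (_ : Q t x y * mY Q y / _ = Q t x y / (mTY Q t y * mXY Q x y / mY Q y)).
  exact: ln_div_lower.
by field; repeat split; lra.
Qed.

Lemma condI_TX_Y_eq0 Q : (forall t x y, 0 <= Q t x y) -> CI_TX_given_Y Q -> condI_TX_Y Q = 0.
Proof.
move=> Q0 CI; rewrite /condI_TX_Y; apply: sumR_eq0 => t.
apply: sumR_eq0 => x; apply: sumR_eq0 => y.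
case: Rlt_dec => //= q0.
have mY0 : 0 < mY Q y.
  apply: Rlt_le_trans q0 (Rle_trans _ _ _ (leR_term_sumR x _) (leR_term_sumR t _)) => // t'.
  exact: sumR_ge0.
rewrite CI /Rdiv Rinv_r ?ln_1 ?Rmult_0_r // -CI.
by have := Rmult_lt_0_compat _ _ q0 mY0; lra.
Qed.

End ConditionalEntropy.

Definition swapXY (T X Y : finType) (Q : jdist T X Y) : jdist T Y X := fun t y x => Q t x y.

Lemma CI_TX_given_Y_of_ratio_const (T X Y : finType) (Q : jdist T X Y) :
  (forall x y, 0 < mXY Q x y) ->
  (forall t x x' y, Q t x y / mXY Q x y = Q t x' y / mXY Q x' y) -> CI_TX_given_Y Q.
Proof.
move=> m0 u_const t x y.
exact: (CI_TY_given_X_of_ratio_const (Q := swapXY Q) (fun y x => m0 x y)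
          (fun t y x x' => u_const t x x' y) t y x).
Qed.

Lemma is_dist_swapXY (T X Y : finType) (Q : jdist T X Y) : is_dist Q -> is_dist (swapXY Q).
Proof.
case=> Q0 Q1; split => [t y x | ]; first exact: Q0.
by rewrite -Q1; apply: eq_sumR => t; exact: exchange_sumR.
Qed.

Lemma condI_TY_X_swapXY (T X Y : finType) (Q : jdist T X Y) :
  condI_TY_X Q = condI_TX_Y (swapXY Q).
Proof. by apply: eq_sumR => t; rewrite exchange_sumR. Qed.

Lemma UI_X_minus_Y_eq0 (T X Y : finType) (P Q : jdist T X Y) :
  DeltaP P Q -> CI_TX_given_Y Q -> UI_X_minus_Y P 0.
Proof.
move=> HQ CI; split; first by exists Q; rewrite condI_TX_Y_eq0 //; exact: HQ.1.1.
by move=> s [Q' [HQ' ->]]; apply: condI_TX_Y_ge0; exact: HQ'.1.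
Qed.

Lemma UI_Y_minus_X_eq0 (T X Y : finType) (P Q : jdist T X Y) :
  DeltaP P Q -> CI_TY_given_X Q -> UI_Y_minus_X P 0.
Proof.
move=> HQ CI; split.
  exists Q; split => //; rewrite condI_TY_X_swapXY condI_TX_Y_eq0 // => [t y x|t y x].
    exact: HQ.1.1.
  exact: CI.
move=> s [Q' [HQ' ->]]; rewrite condI_TY_X_swapXY.
by apply/condI_TX_Y_ge0/is_dist_swapXY; exact: HQ'.1.
Qed.

Lemma maxent_CI (T X Y : finType) (P Q : jdist T X Y) : #|T| = 2%nat ->
  DeltaP P Q -> (forall t x y, 0 < Q t x y) ->
  (forall Q', DeltaP P Q' -> condH_T_XY Q' <= condH_T_XY Q) ->
  CI_TX_given_Y Q \/ CI_TY_given_X Q.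
Proof.
move=> card2 HQ Q0 Qmax.
have [t0 [t1 [t01 cover]]] := card2_cover card2.
have m0 x y : 0 < mXY Q x y := mXY_gt0 t0 x y Q0.
pose u t x y := Q t x y / mXY Q x y.
have u1 x y : u t1 x y = 1 - u t0 x y.
  by have := sumR_div_mXY (m0 x y); rewrite (sumR_card2 _ t01 cover) /u; lra.
have u_cases t : t = t0 \/ forall x y, u t x y = 1 - u t0 x y.
  by case: (cover t) => ->; [left | right].
have compl_rank : rank_le1 (fun x y => 1 - u t0 x y).
  by move=> x x' y y'; rewrite -!u1; exact: (maxent_rank_le1 t1 HQ Q0 Qmax).
have [y_const | x_const] :=
  rank_le1_compl_const (v := u t0) (maxent_rank_le1 t0 HQ Q0 Qmax) compl_rank.
- right; apply: CI_TY_given_X_of_ratio_const => // t x y y'.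
  change (u t x y = u t x y').
  by case: (u_cases t) => [-> | ut]; [exact: y_const | rewrite !ut (y_const x y y')].
- left; apply: CI_TX_given_Y_of_ratio_const => // t x x' y.
  change (u t x y = u t x' y).
  by case: (u_cases t) => [-> | ut]; [exact: x_const | rewrite !ut (x_const x x' y)].
Qed.

Theorem mainTheorem12 (T X Y : finType) (P Qt : jdist T X Y) :
  #|T| = 2%nat ->
  is_dist P ->
  full_supp_DeltaP P ->
  rel_interior_DeltaP P Qt ->
  (forall Q, DeltaP P Q -> condH_T_XY Q <= condH_T_XY Qt) ->
  (CI_TX_given_Y Qt \/ CI_TY_given_X Qt) /\
  (UI_X_minus_Y P 0 \/ UI_Y_minus_X P 0).
Proof.
move=> card2 _ full interior Qmax.
have HQ := interior.1.
have CI := maxent_CI card2 HQ (rel_interior_gt0 full interior) Qmax.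
split => //; case: CI => CI.
  by left; exact: UI_X_minus_Y_eq0 HQ CI.
by right; exact: UI_Y_minus_X_eq0 HQ CI.
Qed.
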